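(* Let $X_1,\dots,X_n$ be i.i.d. Bernoulli random variables with mean $p\in(0,1)$, $\overline{X}_n=\frac1n\sum_{i=1}^nX_i$, and for $z,p\in(0,1)$ let $\mathscr{M}(z,p)=\big(\frac pz\big)^z\big(\frac{1-p}{1-z}\big)^{1-z}$. Let $\varDelta=\min\Big\{\frac12,\ \frac{\mathscr{C}[z^2+(1-z)^2]}{\sqrt{nz(1-z)}}\Big\}$, where $\mathscr{C}$ is the Berry–Esseen constant. Then $$\Pr\{\overline{X}_n\le z\}\le\Big(\frac12+\varDelta\Big)[\mathscr{M}(z,p)]^n\quad\text{for }z\in(0,p),$$ $$\Pr\{\overline{X}_n\ge z\}\le\Big(\frac12+\varDelta\Big)[\mathscr{M}(z,p)]^n\quad\text{for }z\in(p,1).$$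
   Context: The Berry–Esseen constant $\mathscr{C}$ is a positive absolute constant such that for every random variable $Y$ with $\mathbb{E}[Y]=0$, $\mathbb{E}[Y^2]>0$, $\mathbb{E}[|Y|^3]<\infty$, every $n$ and every $y\in\mathbb{R}$, $|F_n(y)-\Phi(y)|\le\frac{\mathscr{C}}{\sqrt n}\frac{\mathbb{E}[|Y|^3]}{\mathbb{E}^{3/2}[Y^2]}$, where $F_n$ is the cdf of $\sum_{i=1}^nY_i/\sqrt{n\mathbb{E}[Y^2]}$ for i.i.d. copies $Y_i$ of $Y$ and $\Phi$ is the standard normal cdf. *)

From HB Require Import structures.
From mathcomp Require Import all_boot all_order all_algebra.
From mathcomp Require Import all_classical all_reals all_analysis.
Set Implicit Arguments. Unset Strict Implicit. Unset Printing Implicit Defensive.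
Import Order.TTheory GRing.Theory Num.Theory.
Import numFieldNormedType.Exports.
Local Open Scope classical_set_scope.
Local Open Scope ring_scope.

Section defs.
Context {R : realType}.

Definition indep_RVs d (T : measurableType d) (P : probability T R) (n : nat)
    (X : 'I_n -> {RV P >-> R}) : Prop :=
  forall B : 'I_n -> set R, (forall i, measurable (B i)) ->
    P (\bigcap_(i in [set: 'I_n]) (X i @^-1` B i)) =
    (\prod_(i < n) P (X i @^-1` B i))%E.

Definition ident_distr d (T : measurableType d) (P : probability T R) (n : nat)
    (X : 'I_n -> {RV P >-> R}) : Prop :=
  forall i j (B : set R), measurable B -> P (X i @^-1` B) = P (X j @^-1` B).

Definition bernoulli_RV d (T : measurableType d) (P : probability T R)
    (p : R) (X : {RV P >-> R}) : Prop :=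
  P (X @^-1` [set 1]) = p%:E /\ P (X @^-1` [set 0]) = (1 - p)%:E.

Definition Phi (y : R) : R := fine (normal_prob 0 1 `]-oo, y]).

Definition berry_esseen_constant (C : R) : Prop :=
  forall (d : measure_display) (T : measurableType d) (P : probability T R)
    (n : nat) (Y : 'I_n.+1 -> {RV P >-> R}),
    indep_RVs Y -> ident_distr Y ->
    ('E_P[fun w => (`|Y ord0 w| ^+ 3)%R] < +oo)%E ->
    ('E_P[Y ord0])%E = 0%E ->
    (0 < 'E_P[fun w => (Y ord0 w ^+ 2)%R])%E ->
    forall y : R,
      `| fine (P [set w | (\sum_(i < n.+1) Y i w) /
                  Num.sqrt (n.+1%:R * fine ('E_P[fun w => (Y ord0 w ^+ 2)%R])%E) <= y])
         - Phi y |
      <= C / Num.sqrt n.+1%:R * fine ('E_P[fun w => (`|Y ord0 w| ^+ 3)%R])%E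
         / (fine ('E_P[fun w => (Y ord0 w ^+ 2)%R])%E) `^ (3 / 2).

Definition Mzp (z p : R) : R := (p / z) `^ z * ((1 - p) / (1 - z)) `^ (1 - z).

Definition Delta (C : R) (n : nat) (z : R) : R :=
  Num.min (1 / 2) (C * (z ^+ 2 + (1 - z) ^+ 2) / Num.sqrt (n%:R * z * (1 - z))).

End defs.

(* Exponential tilting. The vector (X_1, ..., X_n) is almost surely a bit
   vector, distributed with the Bernoulli(p) product weights. A bit vector with
   k ones has Bernoulli(p) weight equal to its Bernoulli(z) weight times
   exp((k - nz) (ln(p/z) - ln((1-p)/(1-z)))) M(z,p)^n, and on the tail event
   {k <= nz} (for z < p), resp. {k >= nz} (for z > p), the exponential factor
   is at most 1. Hence the tail probability is at most M(z,p)^n times the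
   Bernoulli(z) probability of the same event, i.e. the probability that a sum
   of n i.i.d. centred variables is <= 0. Applied to these variables at y = 0,
   the Berry-Esseen inequality bounds it by
   Phi(0) + C (z^2 + (1-z)^2) / sqrt(n z (1-z)), and it is trivially at most 1. *)

From HB Require Import structures.
From mathcomp Require Import all_boot all_order all_algebra.
From mathcomp Require Import all_classical all_reals all_analysis.
From mathcomp Require Import measurable_realfun ring lra.
Import Order.TTheory GRing.Theory Num.Theory.
Import numFieldNormedType.Exports.
Local Open Scope classical_set_scope.
Local Open Scope ring_scope.
Set Implicit Arguments. Unset Strict Implicit. Unset Printing Implicit Defensive.

Definition bits (n : nat) := {ffun 'I_n -> bool}.
HB.instance Definition _ n := Choice.on (bits n).
HB.instance Definition _ n := isPointed.Build (bits n) [ffun=> false].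
HB.instance Definition _ n := @isMeasurable.Build default_measure_display
  (bits n) discrete_measurable discrete_measurable0
  discrete_measurableC discrete_measurableU.

Section bernoulli_weight.
Context {R : realType}.

Definition bit_weight (z : R) (c : bool) : R := if c then z else 1 - z.

Definition prod_weight {n} (z : R) (x : bits n) : R := \prod_i bit_weight z (x i).

Lemma sum_bit_weight z : \sum_c bit_weight z c = 1.
Proof. by rewrite big_bool /=; ring. Qed.

Lemma sum_prod_weight_forall n z (h : 'I_n -> bool -> bool) :
  \sum_(x : bits n) prod_weight z x * [forall i, h i (x i)]%:R =
  \prod_i \sum_c bit_weight z c * (h i c)%:R.
Proof.
rewrite bigA_distr_bigA; apply: eq_bigr => x _; rewrite big_split /=; congr (_ * _).
case: (boolP [forall i, h i (x i)]) => [/forallP hx | /forallPn [i hi]].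
  by rewrite big1 // => i _; rewrite hx.
by rewrite (bigD1 i) //= (negbTE hi) mul0r.
Qed.

Lemma sum_prod_weight n z : \sum_(x : bits n) prod_weight z x = 1.
Proof.
have := sum_prod_weight_forall z (fun (_ : 'I_n) _ => true).
rewrite [X in _ = X -> _]big1 => [<-|i _].
  by apply: eq_bigr => x _; rewrite (_ : [forall i, true]) ?mulr1 //; exact/forallP.
by under eq_bigr do rewrite mulr1; exact: sum_bit_weight.
Qed.

Lemma sum_prod_weight_coord n z (j : 'I_n) (g : bool -> R) :
  \sum_(x : bits n) prod_weight z x * g (x j) = \sum_c bit_weight z c * g c.
Proof.
pose G i c := bit_weight z c * (if i == j then g c else 1).
transitivity (\sum_(x : bits n) \prod_i G i (x i)).
  apply: eq_bigr => x _; rewrite big_split /=; congr (_ * _).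
  rewrite (bigD1 j) //= eqxx big1 ?mulr1 // => i ij.
  by rewrite (negbTE ij).
transitivity (\prod_i \sum_c G i c); first by rewrite bigA_distr_bigA.
rewrite (bigD1 j) //= [X in _ * X]big1 ?mulr1 => [|i ij].
  by apply: eq_bigr => c _; rewrite /G eqxx.
by under eq_bigr do rewrite /G (negbTE ij) mulr1; exact: sum_bit_weight.
Qed.

End bernoulli_weight.

Definition bit_count {R : realType} n (x : bits n) : R := \sum_i (x i)%:R.

Section bernoulli_product.
Context {R : realType} (n : nat) (z : R) (z01 : 0 <= z <= 1).

Lemma prod_weight_ge0 (x : bits n) : 0 <= prod_weight z x.
Proof.
case/andP: z01 => z0 z1.
by apply: prodr_ge0 => i _; rewrite /bit_weight; case: (x i); rewrite ?subr_ge0.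
Qed.

Let point_mass (k : nat) : {measure set (bits n) -> \bar R} :=
  let x : bits n := nth [ffun=> false] (enum (bits n)) k in
  mscale (NngNum (prod_weight_ge0 x)) \d_x.

Local Notation bernoulli_product_msum := (msum point_mass #|bits n|).

Let sum_point_mass (f : bits n -> R) :
  \sum_(k < #|bits n|) f (nth [ffun=> false] (enum (bits n)) k) = \sum_x f x.
Proof. by symmetry; rewrite -big_enum (big_nth [ffun=> false]) big_mkord cardE. Qed.

Let bernoulli_product_msumE A :
  bernoulli_product_msum A = (\sum_x prod_weight z x * \1_A x)%:E.
Proof.
rewrite -sum_point_mass -sumEFin; apply: eq_bigr => k _.
by rewrite /= /mscale /= EFinM.
Qed.

Let bernoulli_product_msumT : bernoulli_product_msum setT = 1%E.
Proof.
rewrite bernoulli_product_msumE -(sum_prod_weight n z).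
by under eq_bigr do rewrite indicT mulr1.
Qed.

HB.instance Definition _ := Measure_isProbability.Build _ _ _
  bernoulli_product_msum bernoulli_product_msumT.

Definition bernoulli_product : probability (bits n) R := bernoulli_product_msum.

Lemma bernoulli_productE A :
  bernoulli_product A = (\sum_x prod_weight z x * \1_A x)%:E.
Proof. exact: bernoulli_product_msumE. Qed.

Let ge0_integral_bernoulli_product (f : bits n -> R) : (forall x, 0 <= f x) ->
  (\int[bernoulli_product]_x (f x)%:E = (\sum_x prod_weight z x * f x)%:E)%E.
Proof.
move=> f0; rewrite ge0_integral_measure_sum //; last by move=> x _; rewrite lee_fin.
rewrite -sum_point_mass -sumEFin; apply: eq_bigr => k _.
rewrite ge0_integral_mscale //; last by move=> x _; rewrite lee_fin.
by rewrite integral_dirac // diracT mul1e -EFinM.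
Qed.

Lemma expectation_bernoulli_product (f : bits n -> R) :
  ('E_bernoulli_product[f] = (\sum_x prod_weight z x * f x)%:E)%E.
Proof.
rewrite unlock integralE.
under eq_integral do rewrite funeposE /= -EFin_max.
under [X in (_ - X)%E]eq_integral do rewrite funenegE /= -EFin_max.
have max0 (r : R) : 0 <= Num.max r 0 by rewrite le_max lexx orbT.
rewrite !ge0_integral_bernoulli_product => [|x|x]; try exact: max0.
rewrite -EFinB -sumrB; congr EFin; apply: eq_bigr => x _.
rewrite -mulrBr; congr (_ * _).
have [fx0|fx0] := leP (f x) 0.
  by rewrite max_l ?oppr_ge0 // sub0r opprK.
by rewrite max_r ?subr0 // oppr_le0 ltW.
Qed.

End bernoulli_product.

Lemma measure_bigsetU_le d (T : measurableType d) (R : realType)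
    (mu : {measure set T -> \bar R}) (I : Type) (s : seq I) (P : pred I)
    (F : I -> set T) : (forall i, measurable (F i)) ->
  (mu (\big[setU/set0]_(i <- s | P i) F i) <= \sum_(i <- s | P i) mu (F i))%E.
Proof.
move=> mF; elim: s => [|a s IH]; first by rewrite !big_nil measure0.
rewrite !big_cons; case: (P a) => //.
apply: le_trans (measureU2 _ _ _) _ => //; first exact: bigsetU_measurable.
exact: leeD.
Qed.

Section bernoulli_family.
Context {R : realType} d (T : measurableType d) (P : probability T R).
Variables (n : nat) (p : R) (X : 'I_n -> {RV P >-> R}).
Hypotheses (Xindep : indep_RVs X) (Xbern : forall i, bernoulli_RV p (X i)).

Definition bits_of (w : T) : bits n := [ffun i => X i w == 1].

Lemma sum_binary_bits_of w : (forall i, X i w = 0 \/ X i w = 1) ->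
  \sum_i X i w = bit_count (bits_of w).
Proof.
move=> w01; apply: eq_bigr => i _; rewrite ffunE.
by case: (w01 i) => ->; rewrite ?eqxx // eq_sym oner_eq0.
Qed.

Let binary : set T := \bigcap_(i in [set: 'I_n]) (X i @^-1` [set 0; 1]).

Let outcome (x : bits n) : set T :=
  \bigcap_(i in [set: 'I_n]) (X i @^-1` [set (x i)%:R]).

Let measurable_preimage1 i r : measurable (X i @^-1` [set r]).
Proof. by apply: measurable_funPTI; exact: measurable_set1. Qed.

Let measurable_binary : measurable binary.
Proof.
apply: fin_bigcap_measurable => [|i _]; first exact: finite_finset.
by rewrite preimage_setU; apply: measurableU; exact: measurable_preimage1.
Qed.

Let measurable_outcome x : measurable (outcome x).
Proof.
apply: fin_bigcap_measurable => [|i _]; first exact: finite_finset.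
exact: measurable_preimage1.
Qed.

Let measure_outcome x : P (outcome x) = (prod_weight p x)%:E.
Proof.
rewrite /outcome Xindep => [|i]; last exact: measurable_set1.
rewrite /prod_weight (big_morph _ EFinM (erefl 1%E)); apply: eq_bigr => i _.
by case: (x i); case: (Xbern i).
Qed.

Let measure_not_binary : P (~` binary) = 0%E.
Proof.
rewrite probability_setC // Xindep => [|i]; last first.
  by apply: measurableU; exact: measurable_set1.
rewrite big1 ?subee // => i _.
rewrite preimage_setU measureU; first last.
- by apply/seteqP; split => // w [/= -> /eqP]; rewrite eq_sym oner_eq0.
- exact: measurable_preimage1.
- exact: measurable_preimage1.
have [P1 P0] := Xbern i.
by rewrite [X in (X + _)%E]P0 [X in (_ + X)%E]P1 -EFinD subrK.
Qed.

Lemma measure_le_prod_weight (E : set T) (A : set (bits n)) : measurable E ->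
  (forall w, (forall i, X i w = 0 \/ X i w = 1) -> E w -> A (bits_of w)) ->
  (P E <= (\sum_x prod_weight p x * \1_A x)%:E)%E.
Proof.
move=> mE EA.
have mU : measurable (\big[setU/set0]_(x | x \in A) outcome x).
  by apply: bigsetU_measurable => x _.
have sub : E `<=` ~` binary `|` \big[setU/set0]_(x | x \in A) outcome x.
  move=> w Ew; have [bw|] := pselect (binary w); last by left.
  have w01 i : X i w = 0 \/ X i w = 1 by case: (bw i I) => ->; [left|right].
  right; rewrite (bigD1 (bits_of w)) /=; last exact/mem_set/EA.
  left => i _ /=; rewrite ffunE.
  by case: (w01 i) => ->; rewrite ?eqxx // eq_sym oner_eq0.
apply: le_trans (le_measure _ _ _ sub) _; rewrite ?inE //.
  by apply: measurableU => //; exact: measurableC.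
apply: le_trans (measureU2 _ _ _) _ => //; first exact: measurableC.
rewrite [X in (X + _)%E](_ : _ = 0%E) ?add0e; last exact: measure_not_binary.
apply: le_trans (measure_bigsetU_le _ _ _ measurable_outcome) _.
rewrite big_mkcond /= -sumEFin; apply: lee_sum => x _.
by rewrite indicE; case: (x \in A); rewrite ?measure_outcome ?mulr1 ?mulr0.
Qed.

End bernoulli_family.

Lemma Phi0 {R : realType} : Phi 0 = 1 / 2 :> R.
Proof.
rewrite /Phi /normal_prob.
set f := normal_pdf (0 : R) 1.
have f0 x : 0 <= f x by exact: normal_pdf_ge0.
have cf : continuous f by apply: continuous_normal_pdf; rewrite oner_neq0.
have f_even : f =1 f \o -%R.
  by move=> x; rewrite /f /= /normal_pdf oner_eq0 /normal_fun !subr0 sqrrN.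
have := ge0_symfun_integralT f0 cf f_even; rewrite integral_normal_pdf.
have -> : (\int[lebesgue_measure]_(x in `]-oo, 0%R]) (f x)%:E =
           \int[lebesgue_measure]_(x in [set x : R | (0 <= x)%R]) (f x)%:E)%E.
  rewrite -{1}oppr0 ge0_integration_by_substitutionNy; last 2 first.
  - exact: continuous_subspaceT.
  - by move=> x _; exact: f0.
  by rewrite -set_itvcy; apply: eq_integral => x _; rewrite -f_even.
case: (\int[lebesgue_measure]_(x in [set x : R | (0 <= x)%R]) (f x)%:E)%E => [r| |] //=.
- by move=> /eqP; rewrite -EFinM eqe => /eqP; lra.
- by rewrite mulry gtr0_sg // mul1e.
- by rewrite mulrNy gtr0_sg // mul1e.
Qed.

Lemma measurable_fun_bits n d' (U : measurableType d') (D : set (bits n))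
  (f : bits n -> U) : measurable_fun D f.
Proof. by []. Qed.

Definition centered_bit {R : realType} (s z : R) n (i : 'I_n) (x : bits n) : R :=
  s * ((x i)%:R - z).

HB.instance Definition _ (R : realType) (s z : R) n i :=
  isMeasurableFun.Build _ _ (bits n) R (centered_bit s z i)
    (@measurable_fun_bits _ _ _ setT (centered_bit s z i)).

(* [s = 1] gives the lower tail [bit_count x <= n z], [s = -1] the upper one. *)
Definition tail_event {R : realType} n (z s : R) : set (bits n) :=
  [set x | s * (bit_count x - n%:R * z) <= 0].

Lemma sum_centered_bit {R : realType} (s z : R) n (x : bits n) :
  \sum_i centered_bit s z i x = s * (bit_count x - n%:R * z).
Proof. by rewrite -mulr_sumr sumrB sumr_const card_ord mulr_natl. Qed.

Section berry_esseen_bernoulli.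
Context {R : realType} (C : R) (HC : berry_esseen_constant C).
Variables (n : nat) (z s : R).
Hypotheses (z01 : 0 < z < 1) (s2 : s ^+ 2 = 1).

Let z01' : 0 <= z <= 1.
Proof. by case/andP: z01 => z0 z1; rewrite !ltW. Qed.

Let Q := bernoulli_product n.+1 z01'.

Let Y (i : 'I_n.+1) : {RV Q >-> R} := centered_bit s z i.

Let law_Y i (B : set R) :
  Q (Y i @^-1` B) = (\sum_c bit_weight z c * (s * (c%:R - z) \in B)%:R)%:E.
Proof.
rewrite bernoulli_productE.
rewrite -(sum_prod_weight_coord z i (fun c => (s * (c%:R - z) \in B)%:R)).
by congr EFin; apply: eq_bigr => x _; rewrite indicE.
Qed.

Let indep_Y : indep_RVs Y.
Proof.
move=> B _; rewrite bernoulli_productE.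
under [RHS]eq_bigr do rewrite law_Y.
rewrite -(big_morph _ EFinM (erefl 1%E)) -sum_prod_weight_forall; congr EFin.
apply: eq_bigr => x _; congr (_ * _); rewrite indicE; congr ((nat_of_bool _)%:R).
apply/idP/forallP => [/set_mem xB i | xB]; first exact/mem_set/xB.
by apply/mem_set => i _; exact/set_mem/xB.
Qed.

Let ident_Y : ident_distr Y.
Proof. by move=> i j B _; rewrite !law_Y. Qed.

Let expectation_Y0 (g : R -> R) :
  ('E_Q[fun x => g (Y ord0 x)] = (z * g (s * (1 - z)) + (1 - z) * g (- (s * z)))%:E)%E.
Proof.
rewrite expectation_bernoulli_product.
rewrite (sum_prod_weight_coord z ord0 (fun c => g (s * (c%:R - z)))) big_bool /=.
by rewrite sub0r mulrN addrC.
Qed.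

Let abs_s : `|s| = 1.
Proof. by apply/eqP; rewrite -sqr_norm_eq1 s2. Qed.

Let pow32 (t : R) : 0 < t -> t `^ (3 / 2) = t * Num.sqrt t.
Proof.
move=> t0; rewrite (_ : 3 / 2 = 1 + 2^-1); last by field.
by rewrite powRD ?gt_eqF ?implybT // powRr1 ?ltW // powR12_sqrt ?ltW.
Qed.

Lemma tail_event_berry_esseen :
  \sum_(x : bits n.+1) prod_weight z x * \1_(tail_event z s) x <=
  1 / 2 + C * (z ^+ 2 + (1 - z) ^+ 2) / Num.sqrt (n.+1%:R * z * (1 - z)).
Proof.
case/andP: z01 => z0 z1.
set q := z ^+ 2 + (1 - z) ^+ 2; set t := z * (1 - z).
have t0 : 0 < t by rewrite mulr_gt0 // subr_gt0.
have EY : ('E_Q[Y ord0] = 0)%E.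
  by rewrite (expectation_Y0 id) /=; congr EFin; ring.
have EY2 : ('E_Q[fun x => (Y ord0 x ^+ 2)%R] = t%:E)%E.
  rewrite (expectation_Y0 (fun y => y ^+ 2)) /=; congr EFin.
  by rewrite sqrrN !exprMn s2 /t; ring.
have EY3 : ('E_Q[fun x => (`|Y ord0 x| ^+ 3)%R] = (t * q)%:E)%E.
  rewrite (expectation_Y0 (fun y => `|y| ^+ 3)) /=; congr EFin.
  rewrite normrN !normrM abs_s !mul1r !ger0_norm ?subr_ge0 ?ltW //.
  by rewrite /t /q; ring.
have := HC indep_Y ident_Y _ EY _ 0; rewrite EY2 EY3 Phi0 /= ltry lte_fin => /(_ isT t0).
have sqrt_gt0 : 0 < Num.sqrt (n.+1%:R * t) by rewrite sqrtr_gt0 mulr_gt0.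
have -> : [set x | (\sum_i Y i x) / Num.sqrt (n.+1%:R * t) <= 0] = tail_event z s.
  by apply/seteqP; split => x; rewrite /= pmulr_lle0 ?invr_gt0 // sum_centered_bit.
rewrite bernoulli_productE /=.
have -> : C / Num.sqrt n.+1%:R * (t * q) / t `^ (3 / 2) =
          C * q / Num.sqrt (n.+1%:R * z * (1 - z)).
  rewrite -[n.+1%:R * z * _]mulrA -/t sqrtrM ?ler0n // pow32 //; field.
  by rewrite !gt_eqF ?sqrtr_gt0 ?ltr0n.
by move=> /(le_trans (ler_norm _)); lra.
Qed.

End berry_esseen_bernoulli.

Section likelihood_ratio.
Context {R : realType} (n : nat) (p z : R).
Hypotheses (p01 : 0 < p < 1) (z01 : 0 < z < 1).

Let a := p / z.
Let b := (1 - p) / (1 - z).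

Let a_gt0 : 0 < a.
Proof. by case/andP: p01 z01 => p0 _ /andP[z0 _]; rewrite divr_gt0. Qed.

Let b_gt0 : 0 < b.
Proof. by case/andP: p01 z01 => _ p1 /andP[_ z1]; rewrite divr_gt0 ?subr_gt0. Qed.

Lemma prod_weight_ratio (x : bits n) :
  prod_weight p x =
  prod_weight z x * expR (bit_count x * ln a + (n%:R - bit_count x) * ln b).
Proof.
case/andP: z01 => z0 z1.
have ratio c : bit_weight p c = bit_weight z c * expR (c%:R * ln a + (1 - c%:R) * ln b).
  case: c => /=; rewrite ?(mul1r, mul0r, subrr, subr0, addr0, add0r) lnK ?posrE //.
  - by rewrite /a mulrC divfK ?gt_eqF.
  - by rewrite /b mulrC divfK // gt_eqF ?subr_gt0.
rewrite /prod_weight /bit_count (eq_bigr _ (fun i _ => ratio (x i))) big_split /=.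
by rewrite -expR_sum big_split /= -!mulr_suml sumrB sumr_const card_ord.
Qed.

Lemma Mzp_expR : Mzp z p ^+ n = expR (n%:R * (z * ln a + (1 - z) * ln b)).
Proof.
rewrite /Mzp /powR -/a -/b !gt_eqF // -expRD expRM_natl.
by congr (expR _ ^+ _); rewrite ![ln _ * _]mulrC.
Qed.

Lemma prod_weight_le_Mzp (x : bits n) :
  (bit_count x - n%:R * z) * (ln a - ln b) <= 0 ->
  prod_weight p x <= Mzp z p ^+ n * prod_weight z x.
Proof.
have z01' : 0 <= z <= 1 by case/andP: z01 => z0 z1; rewrite !ltW.
move=> sign; rewrite prod_weight_ratio Mzp_expR [leRHS]mulrC.
rewrite ler_wpM2l ?(prod_weight_ge0 z01') // ler_expR -subr_ge0.
set k := bit_count x.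
have -> : n%:R * (z * ln a + (1 - z) * ln b) - (k * ln a + (n%:R - k) * ln b) =
          - ((k - n%:R * z) * (ln a - ln b)) by ring.
by rewrite oppr_ge0.
Qed.

End likelihood_ratio.

Lemma ln_ratio_lt {R : realType} (p z : R) : 0 < z < p -> p < 1 ->
  ln ((1 - p) / (1 - z)) < ln (p / z).
Proof.
case/andP => z0 zp p1; have z1 := lt_trans zp p1.
apply: (@lt_trans _ _ 0).
  by rewrite ln_lt0 // divr_gt0 ?subr_gt0 //= ltr_pdivrMr ?subr_gt0 // mul1r ltrD2l ltrN2.
by rewrite ln_gt0 // ltr_pdivlMr // mul1r.
Qed.

Section tail_bound.
Context {R : realType} (C : R) (HC : berry_esseen_constant C) (n : nat) (p z s : R).
Hypotheses (p01 : 0 < p < 1) (z01 : 0 < z < 1) (s2 : s ^+ 2 = 1).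
Hypothesis s_ln : 0 <= s * (ln (p / z) - ln ((1 - p) / (1 - z))).

Lemma tail_event_prod_weight_le :
  \sum_(x : bits n.+1) prod_weight p x * \1_(tail_event z s) x <=
  (1 / 2 + Delta C n.+1 z) * Mzp z p ^+ n.+1.
Proof.
have z01' : 0 <= z <= 1 by case/andP: z01 => z0 z1; rewrite !ltW.
have M_ge0 : 0 <= Mzp z p ^+ n.+1 by rewrite exprn_ge0 // mulr_ge0 // powR_ge0.
set Pz := \sum_(x : bits n.+1) prod_weight z x * \1_(tail_event z s) x.
have Pz_le1 : Pz <= 1.
  rewrite -(sum_prod_weight n.+1 z); apply: ler_sum => x _.
  by apply: ler_piMr; rewrite ?(prod_weight_ge0 z01') // indicE; case: (_ \in _).
have := tail_event_berry_esseen HC n z01 s2; rewrite -/Pz => Pz_BE.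
apply: (@le_trans _ _ (Mzp z p ^+ n.+1 * Pz)).
  rewrite mulr_sumr; apply: ler_sum => x _; rewrite mulrA indicE.
  case: (boolP (x \in tail_event z s)) => [/set_mem xA | _]; rewrite ?mulr0 //.
  rewrite !mulr1; apply: prod_weight_le_Mzp => //.
  by rewrite -[leLHS]mul1r -{1}s2 expr2 mulrACA mulr_le0_ge0.
rewrite mulrC ler_wpM2r // /Delta -lerBlDl le_min; apply/andP; split; lra.
Qed.

Variables (d : measure_display) (T : measurableType d) (P : probability T R).
Variables (X : 'I_n.+1 -> {RV P >-> R}).
Hypotheses (Xindep : indep_RVs X) (Xbern : forall i, bernoulli_RV p (X i)).

Lemma bernoulli_family_tail_le (E : set T) : measurable E ->
  (forall w, E w -> s * (\sum_i X i w - n.+1%:R * z) <= 0) ->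
  (P E <= ((1 / 2 + Delta C n.+1 z) * Mzp z p ^+ n.+1)%:E)%E.
Proof.
move=> mE Etail.
apply: le_trans (measure_le_prod_weight Xindep Xbern (A := tail_event z s) mE _) _.
  by move=> w w01 Ew; rewrite /tail_event /= -sum_binary_bits_of // Etail.
by rewrite lee_fin tail_event_prod_weight_le.
Qed.

End tail_bound.

Theorem theorem6 (R : realType) (C : R) (C_gt0 : 0 < C)
    (HC : berry_esseen_constant C)
    (d : measure_display) (T : measurableType d) (P : probability T R)
    (n : nat) (n_gt0 : (0 < n)%N) (p : R) (p01 : 0 < p < 1)
    (X : 'I_n -> {RV P >-> R})
    (Xindep : indep_RVs X) (Xbern : forall i, bernoulli_RV p (X i)) (z : R) :
  (0 < z < p ->
     (P [set w | (n%:R^-1 * (\sum_(i < n) X i w) <= z)%R]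
      <= ((1 / 2 + Delta C n z) * Mzp z p ^+ n)%:E)%E) /\
  (p < z < 1 ->
     (P [set w | (n%:R^-1 * (\sum_(i < n) X i w) >= z)%R]
      <= ((1 / 2 + Delta C n z) * Mzp z p ^+ n)%:E)%E).
Proof.
move: n_gt0 X Xindep Xbern; case: n => // n _ X Xindep Xbern.
have mean_mfun : measurable_fun setT (fun w => n.+1%:R^-1 * \sum_i X i w).
  by apply: measurable_funM => //; exact: measurable_sum.
case/andP: (p01) => p0 p1; split => /andP[z0 zp].
- apply: (bernoulli_family_tail_le (s := 1) HC p01 _ _ _ Xindep Xbern) => [||||w /=].
  + by rewrite z0 (lt_trans zp p1).
  + exact: expr1n.
  + by rewrite mul1r subr_ge0 ltW // ln_ratio_lt ?z0.
  + by have := measurable_fun_le measurableT mean_mfun (measurable_cst z); rewrite setTI.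
  + by rewrite ler_pdivrMl // mul1r subr_le0.
- apply: (bernoulli_family_tail_le (s := -1) HC p01 _ _ _ Xindep Xbern) => [||||w /=].
  + by rewrite (lt_trans p0 z0) zp.
  + by rewrite sqrrN expr1n.
  + rewrite mulN1r oppr_ge0 subr_le0 ltW //.
    have := @ln_ratio_lt _ (1 - p) (1 - z); rewrite !subKr.
    by apply; [apply/andP; split | ]; lra.
  + by have := measurable_fun_le measurableT (measurable_cst z) mean_mfun; rewrite setTI.
  + by rewrite ler_pdivlMl // mulN1r oppr_le0 subr_ge0.
Qed.
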